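(* In the Cross Model on $\mathbb{Z}_K$ (with $K\ge1$ an integer and $\varepsilon\in(0,1)$), for every integer $n\ge0$, \[ n\big(1+2\varepsilon\nu_{K,\varepsilon}(\bullet,\circ)\big)\le \mathbf{E}\big(D^{K,d}(n,0)\big)\le n\big(1+2\varepsilon\nu_{K,\varepsilon}(\bullet,\circ)\big)+2K. \]
   Context: Cross Model: $\mathbb{Z}_K=\mathbb{Z}\times[\![-K,K]\!]$ with vertical edges $(i,j)\to(i,j+1)$, horizontal edges $(i,j)\to(i+1,j)$ and diagonal edges $(i,j)\to(i+1,j\pm1)$ (within the strip). Vertical and horizontal edges have length $1$, diagonal edges length $2$. All vertical and diagonal edges are open; each horizontal edge is open with probability $1-\varepsilon$, independently. $D^{K,d}(i,j)$ is the length of a shortest open path in $\mathbb{Z}_K$ from $(0,0)$ to $(i,j)$. $\nu_{K,\varepsilon}$ is the stationary distribution of the discrete-time synchronous TASEP on $[\![-K+1,K]\!]$ (state space $\{\bullet,\circ\}^{2K}$, elements $(y^{-K+1},\dots,y^K)$, $\bullet$ = occupied) in which, from time $t$ to $t+1$ independently: each particle at $j<K$ with $j+1$ empty at time $t$ moves to $j+1$ with probability $\varepsilon$; a particle enters at the empty site $-K+1$ with probability $\varepsilon$; a particle at site $K$ exits with probability $\varepsilon$. $\nu_{K,\varepsilon}(\bullet,\circ)=\nu_{K,\varepsilon}(y^0=\bullet,\,y^1=\circ)$. *)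

From HB Require Import structures.
From mathcomp Require Import all_boot all_order all_algebra.
From mathcomp Require Import boolp classical_sets reals.

Set Implicit Arguments.
Unset Strict Implicit.
Unset Printing Implicit Defensive.

Import Order.TTheory GRing.Theory Num.Theory.
Local Open Scope ring_scope.
Local Open Scope classical_set_scope.

Definition vertex := (int * int)%type.

Definition in_strip (K : nat) (v : vertex) : bool :=
  (- (K%:Z) <= v.2) && (v.2 <= K%:Z).

Definition edge_len (w : int -> int -> bool) (a b : vertex) : option nat :=
  if b == (a.1, a.2 + 1) then Some 1%N
  else if b == (a.1 + 1, a.2) then
    (if w a.1 a.2 then Some 1%N else None)
  else if (b == (a.1 + 1, a.2 + 1)) || (b == (a.1 + 1, a.2 - 1))
  then Some 2%N
  else None.

Definition open_edge (K : nat) (w : int -> int -> bool) (a b : vertex) : bool :=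
  [&& in_strip K a, in_strip K b & edge_len w a b != None].

Definition open_path (K : nat) (w : int -> int -> bool)
    (u : vertex) (p : seq vertex) (v : vertex) : bool :=
  path (open_edge K w) u p && (last u p == v).

Definition path_len (w : int -> int -> bool) (u : vertex) (p : seq vertex) : nat :=
  (\sum_(e <- zip (u :: p) p) odflt 0 (edge_len w e.1 e.2))%N.

Definition Dist {R : realType} (K : nat) (w : int -> int -> bool) (v : vertex) : R :=
  inf [set r : R | exists p : seq vertex,
         open_path K w (0, 0) p v /\ r = (path_len w (0, 0) p)%:R].

(* Randomness.  The shortest path from (0,0) to (n,0), n >= 0, only   *)
(* uses horizontal edges (i,j)->(i+1,j) with 0 <= i < n, -K <= j <= K *)
(* (edges are directed rightwards/upwards).  We thus take as          *)
(* probability space the independent Bernoulli states of these        *)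
(* edges; every other horizontal edge is set open (irrelevant).       *)
(* Coordinate (x, y) : 'I_n * 'I_(2K+1) is the edge at (x, y - K).    *)

Definition hconfig (n K : nat) := {ffun 'I_n * 'I_(K.*2.+1) -> bool}.

Definition env (n K : nat) (c : hconfig n K) (i j : int) : bool :=
  match i, (j + K%:Z) with
  | Posz a, Posz b =>
      match (insub a : option 'I_n), (insub b : option 'I_(K.*2.+1)) with
      | Some x, Some y => c (x, y)
      | _, _ => true
      end
  | _, _ => true
  end.

Definition hweight {R : realType} (n K : nat) (eps : R) (c : hconfig n K) : R :=
  \prod_(x : 'I_n * 'I_(K.*2.+1)) (if c x then 1 - eps else eps).

Definition ED {R : realType} (K : nat) (eps : R) (n : nat) : R :=
  \sum_(c : hconfig n K) hweight eps c * Dist K (env c) (n%:Z, 0).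

(* Discrete-time synchronous TASEP on [-K+1, K].                      *)
(* States: {ffun 'I_(2K) -> bool}, index k <-> site k - K + 1,        *)
(* true = occupied.  Bonds b : 'I_(2K+1): bond 0 = entry at site -K+1,*)
(* bond b (1 <= b <= 2K-1) = jump from index b-1 to index b,          *)
(* bond 2K = exit from site K.  Each active bond fires independently  *)
(* with probability eps.                                              *)

Definition tstate (K : nat) := {ffun 'I_(K.*2) -> bool}.
Definition tbonds (K : nat) := {ffun 'I_(K.*2.+1) -> bool}.

Definition occ (K : nat) (y : tstate K) (k : nat) : bool :=
  if (insub k : option 'I_(K.*2)) is Some x then y x else false.

Definition fired (K : nat) (f : tbonds K) (b : nat) : bool :=
  if (insub b : option 'I_(K.*2.+1)) is Some x then f x else false.

Definition active (K : nat) (y : tstate K) (b : nat) : bool :=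
  if b == 0%N then ~~ occ y 0
  else if b == K.*2 then occ y (K.*2).-1
  else occ y b.-1 && ~~ occ y b.

Definition bweight {R : realType} (K : nat) (eps : R) (y : tstate K) (f : tbonds K) : R :=
  \prod_(b : 'I_(K.*2.+1))
     (if active y b then (if f b then eps else 1 - eps)
      else (if f b then 0 else 1)).

Definition tupdate (K : nat) (y : tstate K) (f : tbonds K) : tstate K :=
  [ffun k : 'I_(K.*2) => (y k && ~~ fired f k.+1) || fired f k].

Definition ttrans {R : realType} (K : nat) (eps : R) (y y' : tstate K) : R :=
  \sum_(f : tbonds K) bweight eps y f * (tupdate y f == y')%:R.

Definition tasep_stationary {R : realType} (K : nat) (eps : R)
    (nu : {ffun tstate K -> R}) : Prop :=
  [/\ forall y, 0 <= nu y,
      \sum_(y : tstate K) nu y = 1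
    & forall y' : tstate K, \sum_(y : tstate K) nu y * ttrans eps y y' = nu y'].

(* nu(y^0 = occupied, y^1 = empty); site 0 <-> index K-1, site 1 <-> index K *)
Definition nu_oc {R : realType} (K : nat) (nu : {ffun tstate K -> R}) : R :=
  \sum_(y : tstate K | occ y K.-1 && ~~ occ y K) nu y.

From HB Require Import structures.
From mathcomp Require Import all_boot all_order all_algebra.
From mathcomp Require Import boolp classical_sets reals.
From mathcomp Require Import zify ring lra.
Import Order.TTheory GRing.Theory Num.Theory.
Local Open Scope ring_scope.

(* Read the distances D(i, j) along column i as a height profile in the row j.  All
   vertical and diagonal edges being open, the profile has slopes +1 and -1, and its
   down-steps form a TASEP configuration on the sites of the strip.  Passing to column
   i+1 raises every height by 1, and by 2 more exactly at the bonds where a particle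
   jumps: a bond fires when it is active and its horizontal edge is closed, which has
   probability eps.  So the height at row 0 grows by 1 + 2 [jump across the bond
   between sites 0 and 1] per column, whose mean is 1 + 2 eps nu(occupied, empty)
   when the TASEP starts from its stationary law nu.  The true initial profile |j| lies between a
   stationary profile normalised at row 0 and that profile plus 2K, and the column
   recursion is monotone and commutes with constant shifts, so the expectation of
   D(n, 0) is squeezed between the two bounds. *)

Set Implicit Arguments.
Unset Strict Implicit.
Unset Printing Implicit Defensive.

Section HeightFunctions.
Variable K : nat.
Hypothesis K_gt0 : (0 < K)%N.
Implicit Types (col : nat -> bool) (h g : nat -> int).

Definition slope h (b : nat) : int := h b.+1 - h b.

Definition unit_slopes h :=
  forall b, (b < K.*2)%N -> slope h b = 1 \/ slope h b = -1.

Definition height_state h : tstate K := [ffun k : 'I_(K.*2) => slope h k == -1].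

Definition jumps h col (b : nat) : bool := ~~ col b && active (height_state h) b.

Definition height_step h col : nat -> int :=
  fun b => h b + (if jumps h col b then 3 else 1).

Lemma occ_height_state h k : (k < K.*2)%N -> occ (height_state h) k = (slope h k == -1).
Proof. by move=> hk; rewrite /occ (insubT (fun i => i < K.*2)%N hk) /= ffunE. Qed.

Lemma active_slope_below h b : (b <= K.*2)%N -> active (height_state h) b ->
  (0 < b)%N -> slope h b.-1 = -1.
Proof.
move=> hb; rewrite /active; case: eqP => [->//|b0].
case: eqP => [-> | b2].
  by rewrite occ_height_state ?prednK ?double_gt0 ?ltnSn // => /eqP.
by case/andP; rewrite occ_height_state; [move=> /eqP | lia].
Qed.

Lemma active_slope_above h b : unit_slopes h -> active (height_state h) b ->
  (b < K.*2)%N -> slope h b = 1.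
Proof.
move=> V; rewrite /active; case: eqP => [-> | b0].
  by rewrite occ_height_state ?double_gt0 // => /eqP H; case: (V 0%N); rewrite ?double_gt0.
case: eqP => [-> | b2]; first by rewrite ltnn.
move=> /andP[_ H] hb; move: H; rewrite occ_height_state // => /eqP H.
by case: (V b hb).
Qed.

Lemma inactive_slopes h b : unit_slopes h -> (b <= K.*2)%N ->
  ~~ active (height_state h) b ->
  ((0 < b)%N /\ slope h b.-1 = 1) \/ ((b < K.*2)%N /\ slope h b = -1).
Proof.
move=> V hb; rewrite /active; case: eqP => [-> | b0].
  by rewrite negbK occ_height_state ?double_gt0 // => /eqP H; right.
case: eqP => [-> | b2].
  have hk : ((K.*2).-1 < K.*2)%N by lia.
  rewrite occ_height_state // => /eqP H; left; split; first by lia.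
  by case: (V (K.*2).-1).
rewrite negb_and negbK; case/orP.
  have hk : (b.-1 < K.*2)%N by lia.
  rewrite occ_height_state // => /eqP H; left; split; first by lia.
  by case: (V b.-1).
have hk : (b < K.*2)%N by lia.
by rewrite occ_height_state // => /eqP H; right.
Qed.

Lemma height_step_le_open h col b : col b -> height_step h col b <= h b + 1.
Proof. by move=> cb; rewrite /height_step /jumps cb. Qed.

Lemma height_step_le_diag_up h col b : unit_slopes h -> (b < K.*2)%N ->
  height_step h col b.+1 <= h b + 2.
Proof.
move=> V hb; rewrite /height_step /jumps; case: ifP => [/andP[_ A]|_].
  by have := active_slope_below hb A isT; rewrite /slope /=; lia.
by case: (V b hb); rewrite /slope; lia.
Qed.

Lemma height_step_le_diag_down h col b : unit_slopes h -> (b < K.*2)%N ->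
  height_step h col b <= h b.+1 + 2.
Proof.
move=> V hb; rewrite /height_step /jumps; case: ifP => [/andP[_ A]|_].
  by have := active_slope_above V A hb; rewrite /slope; lia.
by case: (V b hb); rewrite /slope; lia.
Qed.

Lemma slope_height_step h col b : slope (height_step h col) b =
  slope h b + (if jumps h col b.+1 then 2 else 0) - (if jumps h col b then 2 else 0).
Proof. by rewrite /slope /height_step; case: (jumps _ _ b); case: (jumps _ _ b.+1); ring. Qed.

Lemma no_jump_at_down_slope h col b : unit_slopes h -> (b < K.*2)%N ->
  slope h b = -1 -> ~~ jumps h col b.
Proof.
by move=> V hb Hb; apply/negP => /andP[_ A]; have := active_slope_above V A hb; rewrite Hb.
Qed.

Lemma height_step_slope_cases h col b : unit_slopes h -> (b < K.*2)%N ->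
  (slope h b = 1 /\ ~~ jumps h col b.+1) \/ (slope h b = -1 /\ ~~ jumps h col b).
Proof.
move=> V hb; case: (V b hb) => H.
  left; split=> //; apply/negP => /andP[_ A].
  by have := active_slope_below hb A isT; rewrite H.
by right; split=> //; apply: no_jump_at_down_slope.
Qed.

Lemma unit_slopes_step h col : unit_slopes h -> unit_slopes (height_step h col).
Proof.
move=> V b hb; rewrite slope_height_step.
by case: (height_step_slope_cases col V hb) => -[-> /negbTE ->];
  case: (jumps h col _); [right | left | left | right].
Qed.

Lemma height_step_down_prefix h col m : unit_slopes h -> (m <= K.*2)%N ->
  (forall a, (a < m)%N -> slope h a = -1) ->
  forall a, (a.+1 < m)%N -> slope (height_step h col) a = -1.
Proof.
move=> V hm F a ha.
have Fa : slope h a = -1 by apply: F; lia.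
have Fa1 : slope h a.+1 = -1 by apply: F.
have [ha1 ha2] : (a < K.*2)%N /\ (a.+1 < K.*2)%N by lia.
by rewrite slope_height_step Fa !ifN ?no_jump_at_down_slope //; lia.
Qed.

Lemma height_step_attained h col m b : unit_slopes h -> (m < K.*2)%N ->
  (forall a, (a < m)%N -> slope h a = -1) -> (b <= K.*2)%N -> (m <= b.+1)%N ->
  [\/ [/\ col b, (m <= b)%N & height_step h col b = h b + 1],
      [/\ (0 < b)%N, (m <= b.-1)%N & height_step h col b = h b.-1 + 2]
    | (b < K.*2)%N /\ height_step h col b = h b.+1 + 2].
Proof.
move=> V hm F hb hmb.
have up_above_m a : (a < K.*2)%N -> slope h a = 1 -> (m <= a)%N.
  by move=> ha da; case: (leqP m a) => // am; have := F a am; lia.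
rewrite /height_step; case Jb: (jumps h col b).
  have A : active (height_state h) b by case/andP: Jb.
  case: (ltnP b K.*2) => hb2.
    by have := active_slope_above V A hb2; rewrite /slope => H; apply: Or33; split; lia.
  have b0 : (0 < b)%N by lia.
  have := active_slope_below hb A b0; rewrite /slope prednK // => H.
  by apply: Or32; split; lia.
have [cb | ncb] := boolP (col b).
  case: (ltnP b K.*2) => hb2; last by apply: Or31; split; lia.
  case: (V b hb2) => H; first by apply: Or31; split; [| exact: up_above_m | lia].
  by apply: Or33; split=> //; move: H; rewrite /slope; lia.
have nA : ~~ active (height_state h) b by move: Jb; rewrite /jumps ncb /= => ->.
case: (inactive_slopes V hb nA) => [[b0 H] | [hb2 H]].
  have mb : (m <= b.-1)%N by apply: up_above_m => //; lia.
  by move: H; rewrite /slope prednK // => H; apply: Or32; split; lia.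
by apply: Or33; split=> //; move: H; rewrite /slope; lia.
Qed.

Lemma height_step_le_shift h g col (a : int) : unit_slopes h -> unit_slopes g ->
  (forall b, (b <= K.*2)%N -> h b <= g b + a) ->
  forall b, (b <= K.*2)%N -> height_step h col b <= height_step g col b + a.
Proof.
move=> Vh Vg H b hb.
have no_prefix x : (x < 0)%N -> slope g x = -1 by [].
case: (height_step_attained col Vg _ no_prefix hb isT); first by rewrite double_gt0.
- by move=> [cb _ ->]; have := height_step_le_open h cb; have := H b hb; lia.
- move=> [b0 _ ->]; have hb1 : (b.-1 < K.*2)%N by lia.
  have := height_step_le_diag_up col Vh hb1; rewrite prednK //.
  by have := H b.-1 (ltnW hb1); lia.
- by move=> [hb2 ->]; have := height_step_le_diag_down col Vh hb2; have := H b.+1 hb2; lia.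
Qed.

Definition jump_bonds h col : tbonds K := [ffun b : 'I_(K.*2.+1) => jumps h col b].

Lemma height_state_step h col : unit_slopes h ->
  height_state (height_step h col) = tupdate (height_state h) (jump_bonds h col).
Proof.
move=> V; apply/ffunP => k; rewrite !ffunE.
have firedE j : (j <= K.*2)%N -> fired (jump_bonds h col) j = jumps h col j.
  by move=> hj; rewrite /fired (insubT (fun i => i < K.*2.+1)%N hj) /= ffunE.
have hk := ltn_ord k.
rewrite !firedE ?slope_height_step //; last by lia.
by case: (height_step_slope_cases col V hk) => -[-> /negbTE ->];
  case: (jumps h col _).
Qed.

End HeightFunctions.

Section Paths.
Variables (K : nat) (w : int -> int -> bool).

Fixpoint path_len_rec (u : vertex) (p : seq vertex) : nat :=
  if p is a :: p' then (odflt 0%N (edge_len w u a) + path_len_rec a p')%N else 0%N.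

Lemma path_lenE u p : path_len w u p = path_len_rec u p.
Proof. by elim: p u => [|a p IH] u; rewrite /path_len /= ?big_nil // big_cons /= -IH. Qed.

Lemma path_len_rec_rcons u p a :
  path_len_rec u (rcons p a) = (path_len_rec u p + odflt 0%N (edge_len w (last u p) a))%N.
Proof. by elim: p u => [|x p IH] u /=; rewrite ?addn0 // IH addnA. Qed.

Lemma open_path_rcons u p v a l : open_path K w u p v ->
  in_strip K v -> in_strip K a -> edge_len w v a = Some l ->
  open_path K w u (rcons p a) a /\ path_len_rec u (rcons p a) = (path_len_rec u p + l)%N.
Proof.
move=> /andP[P /eqP L] Sv Sa El.
by rewrite /open_path rcons_path P L /open_edge Sv Sa El last_rcons eqxx
  path_len_rec_rcons L El.
Qed.

Lemma edge_len_up x y : edge_len w (x, y) (x, y + 1) = Some 1%N.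
Proof. by rewrite /edge_len /= eqxx. Qed.

Lemma edge_len_right x y : edge_len w (x, y) (x + 1, y) = if w x y then Some 1%N else None.
Proof.
rewrite /edge_len /=.
have -> : ((x + 1, y) == (x, y + 1)) = false by rewrite xpair_eqE; lia.
by rewrite eqxx.
Qed.

Lemma edge_len_diag_up x y : edge_len w (x, y) (x + 1, y + 1) = Some 2%N.
Proof.
rewrite /edge_len /=.
have -> : ((x + 1, y + 1) == (x, y + 1)) = false by rewrite xpair_eqE; lia.
have -> : ((x + 1, y + 1) == (x + 1, y)) = false by rewrite xpair_eqE; lia.
by rewrite eqxx.
Qed.

Lemma edge_len_diag_down x y : edge_len w (x, y) (x + 1, y - 1) = Some 2%N.
Proof.
rewrite /edge_len /=.
have -> : ((x + 1, y - 1) == (x, y + 1)) = false by rewrite xpair_eqE; lia.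
have -> : ((x + 1, y - 1) == (x + 1, y)) = false by rewrite xpair_eqE; lia.
by rewrite eqxx orbT.
Qed.

End Paths.

Section Columns.
Variables (n K : nat) (c : hconfig n K).
Local Notation w := (env c).

(* Row [b] of the strip is the line [j = b - K]. *)
Definition col_open (i : nat) : nat -> bool := fun b => w (Posz i) (Posz b - Posz K).

Fixpoint column (h0 : nat -> int) (i : nat) : nat -> int :=
  if i is i'.+1 then height_step K (column h0 i') (col_open i') else h0.

(* For [b >= K] this is the distance from [(0,0)] to [(0, b - K)]; the rows below
   are unreachable, and continuing them with slope [-1] keeps unit slopes without
   creating shortcuts (see [column_origin_down_prefix]). *)
Definition origin_column (b : nat) : int := if (b <= K)%N then Posz (K - b) else Posz (b - K).

Lemma unit_slopes_origin_column : unit_slopes K origin_column.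
Proof. by move=> b hb; rewrite /slope /origin_column; case: ifP; case: ifP; lia. Qed.

Hypothesis K_gt0 : (0 < K)%N.

Lemma unit_slopes_column h0 i : unit_slopes K h0 -> unit_slopes K (column h0 i).
Proof. by move=> V; elim: i => //= i IH; apply: unit_slopes_step. Qed.

Lemma column_origin_down_prefix i a :
  (a < K - i)%N -> slope (column origin_column i) a = -1.
Proof.
elim: i a => [|i IH] a ha /=; first by rewrite /slope /origin_column; case: ifP; case: ifP; lia.
apply: (@height_step_down_prefix K K_gt0 _ _ (K - i)) => //; last by lia.
  exact: unit_slopes_column unit_slopes_origin_column.
by lia.
Qed.

Lemma column_le_open_edge i b a : (b <= K.*2)%N ->
  open_edge K w (Posz i, Posz b - Posz K) a ->
  exists i' b', [/\ a = (Posz i', Posz b' - Posz K), (b' <= K.*2)%N &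
    column origin_column i' b' <= column origin_column i b +
      Posz (odflt 0%N (edge_len w (Posz i, Posz b - Posz K) a))].
Proof.
move=> hb; case: a => x y; rewrite /open_edge /in_strip => /and3P[_ S E].
have V := unit_slopes_column i unit_slopes_origin_column.
move: E S; rewrite /edge_len.
case: ifP => [/eqP [-> ->] _ /= S | _].
  have hb' : (b < K.*2)%N by lia.
  exists i, b.+1; split; [congr (_,_); lia | lia |].
  by case: (V b hb'); rewrite /slope /=; lia.
case: ifP => [/eqP [-> ->] | _].
  case Wb: (w _ _) => // _ S.
  exists i.+1, b; split; [congr (_,_); lia | lia |] => /=.
  by have := @height_step_le_open K (column origin_column i) (col_open i) b Wb; lia.
case: ifP => // /orP [/eqP [-> ->] | /eqP [-> ->]] _ /= S.
  have hb' : (b < K.*2)%N by lia.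
  exists i.+1, b.+1; split; [congr (_,_); lia | lia |] => /=.
  by have := height_step_le_diag_up K_gt0 (col_open i) V hb'; lia.
have hb' : (b.-1 < K.*2)%N by lia.
exists i.+1, b.-1; split; [congr (_,_); lia | lia |] => /=.
have := height_step_le_diag_down K_gt0 (col_open i) V hb'.
by rewrite prednK; lia.
Qed.

Lemma column_le_open_path p i b v : (b <= K.*2)%N ->
  open_path K w (Posz i, Posz b - Posz K) p v ->
  exists i' b', [/\ v = (Posz i', Posz b' - Posz K), (b' <= K.*2)%N &
    column origin_column i' b' <=
      column origin_column i b + Posz (path_len_rec w (Posz i, Posz b - Posz K) p)].
Proof.
elim: p i b => [|a p IH] i b hb.
  by rewrite /open_path /= => /eqP <-; exists i, b; split=> //; rewrite addr0.
rewrite /open_path /= => /andP[/andP[E P] L].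
have [i1 [b1 [Ea hb1 H1]]] := column_le_open_edge hb E.
rewrite Ea in P L H1.
have [i' [b' [-> hb' H2]]] := IH i1 b1 hb1 (introT andP (conj P L)).
exists i', b'; split=> //; apply: le_trans H2 _.
by rewrite Ea /= PoszD addrA lerD2r.
Qed.

Lemma vertical_path t : (t <= K)%N ->
  exists p, open_path K w (0, 0) p (0, Posz t) /\ path_len_rec w (0, 0) p = t.
Proof.
elim: t => [_|t IH ht]; first by exists [::]; rewrite /open_path /= eqxx.
have [p [P L]] := IH (ltnW ht).
have Sv : in_strip K (0, Posz t) by rewrite /in_strip /=; lia.
have Sa : in_strip K (0, Posz t + 1) by rewrite /in_strip /=; lia.
have [P' L'] := open_path_rcons P Sv Sa (edge_len_up w 0 (Posz t)).
exists (rcons p (0, Posz t + 1)); rewrite L' L addn1.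
by have -> : Posz t.+1 = Posz t + 1 by lia.
Qed.

Definition reaches_column i b :=
  exists p, open_path K w (0, 0) p (Posz i, Posz b - Posz K) /\
    Posz (path_len_rec w (0, 0) p) = column origin_column i b.

Lemma reaches_column_step i b' b l : (b' <= K.*2)%N -> (b <= K.*2)%N ->
  edge_len w (Posz i, Posz b' - Posz K) (Posz i.+1, Posz b - Posz K) = Some l ->
  column origin_column i.+1 b = column origin_column i b' + Posz l ->
  reaches_column i b' -> reaches_column i.+1 b.
Proof.
move=> hb' hb El E [p [P L]].
have Sv : in_strip K (Posz i, Posz b' - Posz K) by rewrite /in_strip /=; lia.
have Sa : in_strip K (Posz i.+1, Posz b - Posz K) by rewrite /in_strip /=; lia.
have [P' L'] := open_path_rcons P Sv Sa El.
by exists (rcons p (Posz i.+1, Posz b - Posz K)); rewrite L' PoszD L E.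
Qed.

Lemma reaches_column_all i b : (b <= K.*2)%N -> (K <= b + i)%N -> reaches_column i b.
Proof.
elim: i b => [|i IH] b hb hbi.
  have [p [P L]] := @vertical_path (b - K) ltac:(lia).
  exists p; split.
    by have -> : (Posz 0, Posz b - Posz K) = (0, Posz (b - K)) by congr (_,_); lia.
  by rewrite L /= /origin_column; case: ifP; lia.
have V := unit_slopes_column i unit_slopes_origin_column.
have Si : Posz i.+1 = Posz i + 1 by lia.
case: (height_step_attained K_gt0 (col_open i) (m := K - i) V _
        (@column_origin_down_prefix i) hb _); [lia | lia | ..].
- move=> [cb mb E]; apply: (reaches_column_step hb hb _ E); last by apply: IH; lia.
  by rewrite Si edge_len_right [w _ _]cb.
- move=> [b0 mb E]; apply: (reaches_column_step _ hb _ E); [lia | | apply: IH; lia].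
  have -> : Posz b - Posz K = Posz b.-1 - Posz K + 1 by lia.
  by rewrite Si edge_len_diag_up.
- move=> [hb2 E]; apply: (reaches_column_step _ hb _ E); [lia | | apply: IH; lia].
  have -> : Posz b - Posz K = Posz b.+1 - Posz K - 1 by lia.
  by rewrite Si edge_len_diag_down.
Qed.

Lemma Dist_column (R : realType) :
  Dist (R := R) K w (Posz n, 0) = (column origin_column n K)%:~R.
Proof.
have hK : (K <= K.*2)%N by lia.
have [p [P L]] := @reaches_column_all n K hK (leq_addr n K).
rewrite subrr in P.
rewrite -L /Dist; set S := (X in inf X).
have Sp : S (path_len_rec w (0, 0) p)%:R by exists p; rewrite path_lenE.
have lbS : lbound S (path_len_rec w (0, 0) p)%:R.
  move=> r [q [Q ->]]; rewrite ler_nat path_lenE -lez_nat L.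
  have Q' : open_path K w (Posz 0, Posz K - Posz K) q (Posz n, Posz K - Posz K).
    by rewrite subrr.
  have [i' [b' [/eqP Ev _]]] := column_le_open_path hK Q'.
  move: Ev; rewrite xpair_eqE => /andP[/eqP [<-] /eqP Eb].
  have -> : b' = K by lia.
  by rewrite /= /origin_column leqnn subnn add0r subrr.
apply/le_anti/andP; split.
  by apply: ge_inf => //; exists (path_len_rec w (0, 0) p)%:R.
by apply: lb_le_inf => //; exists (path_len_rec w (0, 0) p)%:R.
Qed.

End Columns.

Section Bernoulli.
Variables (R : realType) (eps : R).

Definition bern (b : bool) : R := if b then 1 - eps else eps.

Definition bern_weight (X : finType) (c : {ffun X -> bool}) : R := \prod_x bern (c x).

Lemma sum_bern : \sum_(b : bool) bern b = 1.
Proof. by rewrite big_bool /bern /= subrK. Qed.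

Lemma sum_bern_weight (X : finType) : \sum_(c : {ffun X -> bool}) bern_weight c = 1.
Proof.
by rewrite /bern_weight -(bigA_distr_bigA (fun _ => bern)) big1 // => x _; exact: sum_bern.
Qed.

Lemma sum_bern_weight_coord (X : finType) (x0 : X) (F : bool -> R) :
  \sum_(c : {ffun X -> bool}) bern_weight c * F (c x0) = \sum_(b : bool) bern b * F b.
Proof.
transitivity (\sum_(c : {ffun X -> bool})
    \prod_x (bern (c x) * (if x == x0 then F (c x) else 1))).
  apply: eq_bigr => c _; rewrite big_split /=; congr (_ * _).
  by rewrite (bigD1 x0) //= eqxx big1 ?mulr1 // => x /negbTE ->.
rewrite -(bigA_distr_bigA (fun x b => bern b * (if x == x0 then F b else 1))) /=.
rewrite (bigD1 x0) //= [X in _ * X]big1 ?mulr1.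
  by apply: eq_bigr => b _; rewrite eqxx.
by move=> x /negbTE xn; rewrite -[RHS]sum_bern; apply: eq_bigr => b _; rewrite xn mulr1.
Qed.

Definition merge_ffun (X : finType) (S : pred X) (c d : {ffun X -> bool}) :=
  [ffun x => if S x then d x else c x].

Lemma bern_weight_merge (X : finType) (S : pred X) c d :
  bern_weight (merge_ffun S c d) * bern_weight (merge_ffun S d c) =
  bern_weight c * bern_weight d.
Proof.
rewrite /bern_weight -!big_split /=; apply: eq_bigr => x _; rewrite !ffunE.
by case: (S x) => //; rewrite mulrC.
Qed.

Lemma merge_ffunK (X : finType) (S : pred X) c d :
  merge_ffun S (merge_ffun S c d) (merge_ffun S d c) = c.
Proof. by apply/ffunP => x; rewrite !ffunE; case: (S x). Qed.

(* Swapping the [S]-coordinates of two independent copies preserves the product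
   weight; [A] ignores them and [B] reads nothing else. *)
Lemma bern_mean_indep (X : finType) (S : pred X) (A B : {ffun X -> bool} -> R) :
  (forall c d, A (merge_ffun S c d) = A c) -> (forall c d, B (merge_ffun S c d) = B d) ->
  \sum_c bern_weight c * (A c * B c) =
  (\sum_c bern_weight c * A c) * (\sum_c bern_weight c * B c).
Proof.
move=> HA HB; symmetry; rewrite big_distrl /=.
under eq_bigr do rewrite big_distrr /=.
rewrite pair_big /=.
pose swap (p : {ffun X -> bool} * {ffun X -> bool}) :=
  (merge_ffun S p.1 p.2, merge_ffun S p.2 p.1).
have swapK : involutive swap by case=> c d; rewrite /swap /= !merge_ffunK.
rewrite (reindex_inj (inv_inj swapK)) /=.
transitivity (\sum_(p : {ffun X -> bool} * {ffun X -> bool})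
    bern_weight p.1 * (A p.1 * B p.1) * bern_weight p.2).
  apply: eq_bigr => -[c d] _ /=; rewrite HA HB.
  by rewrite mulrACA bern_weight_merge; ring.
rewrite -(pair_big predT predT (fun c d => bern_weight c * (A c * B c) * bern_weight d)) /=.
by apply: eq_bigr => c _; rewrite -big_distrr /= sum_bern_weight mulr1.
Qed.

Lemma eq_ffun_prod (T : finType) (f g : {ffun T -> bool}) :
  ((f == g)%:R : R) = \prod_t ((f t == g t)%:R).
Proof.
case: eqP => [->|/eqP ne]; first by rewrite big1 // => t _; rewrite eqxx.
have [t Ht] : exists t, f t != g t.
  apply/existsP; apply: contraR ne => /existsPn H; apply/eqP/ffunP => t.
  by have := H t; rewrite negbK => /eqP.
by rewrite (bigD1 t) //= (negbTE Ht) mul0r.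
Qed.

Lemma sum_eq_indicator (T : finType) (x : T) (G : T -> R) :
  \sum_y ((x == y)%:R * G y) = G x.
Proof.
rewrite (bigD1 x) //= eqxx mul1r big1 ?addr0 // => y /negbTE.
by rewrite eq_sym => ->; rewrite mul0r.
Qed.

Lemma prod_row n m (i : 'I_n) (F : 'I_m -> R) :
  \prod_(x : 'I_n * 'I_m) (if x.1 == i then F x.2 else 1) = \prod_b F b.
Proof.
transitivity (\prod_a \prod_b (if a == i then F b else 1)).
  by rewrite pair_big; apply: eq_bigr => -[a b].
rewrite (bigD1 i) //= [X in _ * X]big1 ?mulr1; last first.
  by move=> a /negbTE an; rewrite big1 // => b _; rewrite an.
by apply: eq_bigr => b _; rewrite eqxx.
Qed.

Lemma sum_bern_weight_row n m (i : 'I_n) (G : {ffun 'I_m -> bool} -> R) :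
  \sum_(c : {ffun 'I_n * 'I_m -> bool}) bern_weight c * G [ffun b => c (i, b)] =
  \sum_(row : {ffun 'I_m -> bool}) bern_weight row * G row.
Proof.
transitivity (\sum_(c : {ffun 'I_n * 'I_m -> bool}) \sum_row
    (bern_weight c * (([ffun b => c (i, b)] == row)%:R * G row))).
  by apply: eq_bigr => c _; rewrite -big_distrr /= sum_eq_indicator.
rewrite exchange_big /=; apply: eq_bigr => row _.
transitivity (\sum_(c : {ffun 'I_n * 'I_m -> bool}) \prod_x
    (bern (c x) * (if x.1 == i then (c x == row x.2)%:R else 1)) * G row).
  apply: eq_bigr => c _; rewrite mulrA; congr (_ * _).
  rewrite big_split /=; congr (_ * _).
  transitivity (\prod_b ((c (i, b) == row b)%:R : R)).
    by rewrite eq_ffun_prod; apply: eq_bigr => b _; rewrite ffunE.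
  rewrite -(prod_row i (fun b => (c (i, b) == row b)%:R)).
  by apply: eq_bigr => -[a b] _ /=; case: eqP => // ->.
rewrite -big_distrl /=.
rewrite -(bigA_distr_bigA (fun x b => bern b * (if x.1 == i then (b == row x.2)%:R else 1))).
congr (_ * _); rewrite /bern_weight -(prod_row i (fun b => bern (row b))).
apply: eq_bigr => -[a b] _ /=; case: eqP => _.
  by case: (row b); rewrite big_bool /= ?mulr1 ?mulr0 ?addr0 ?add0r.
by rewrite -[RHS]sum_bern; apply: eq_bigr => bb _; rewrite mulr1.
Qed.

Definition tasep_bonds K (y : tstate K) (closed : tbonds K) : tbonds K :=
  [ffun b => ~~ closed b && active y b].

Lemma ttrans_bern K (y y' : tstate K) :
  \sum_(col : tbonds K) bern_weight col * (tupdate y (tasep_bonds y col) == y')%:R =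
  ttrans eps y y'.
Proof.
transitivity (\sum_(col : tbonds K) \sum_(f : tbonds K)
   (bern_weight col * ((tasep_bonds y col == f)%:R * (tupdate y f == y')%:R))).
  by apply: eq_bigr => col _; rewrite -big_distrr /= sum_eq_indicator.
rewrite exchange_big /=; apply: eq_bigr => f _.
transitivity (\sum_(col : tbonds K) \prod_b
    (bern (col b) * ((~~ col b && active y b) == f b)%:R) * (tupdate y f == y')%:R).
  apply: eq_bigr => col _; rewrite mulrA; congr (_ * _).
  rewrite big_split /= eq_ffun_prod; congr (_ * _).
  by apply: eq_bigr => b _; rewrite ffunE.
rewrite -big_distrl /=.
rewrite -(bigA_distr_bigA
  (fun (b : 'I_(K.*2.+1)) bb => bern bb * ((~~ bb && active y b) == f b)%:R)).
congr (_ * _); apply: eq_bigr => b _.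
by rewrite big_bool /bern /=; case: (active y b); case: (f b) => /=; ring.
Qed.

End Bernoulli.

Section StationaryStart.
Variables (n K : nat).
Definition state_height (z : tstate K) (b : nat) : int :=
  \sum_(k < b) (if occ z k then -1 else 1).

(* The height profile of [z], normalised to vanish at row [K], i.e. at [j = 0]. *)
Definition state_column (z : tstate K) (b : nat) : int := state_height z b - state_height z K.

Lemma slope_state_column z b : slope (state_column z) b = if occ z b then -1 else 1.
Proof.
by rewrite /slope /state_column /state_height big_ord_recr /=; case: (occ z b); ring.
Qed.

Lemma unit_slopes_state_column z : unit_slopes K (state_column z).
Proof. by move=> b _; rewrite slope_state_column; case: (occ z b); [right | left]. Qed.

Lemma height_state_column z : height_state K (state_column z) = z.
Proof.
apply/ffunP => k; rewrite ffunE slope_state_column.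
rewrite /occ (insubT (fun i => i < K.*2)%N (ltn_ord k)) /= (_ : Sub _ _ = k);
  last exact: val_inj.
by case: (z k).
Qed.

Lemma state_height_lipschitz z a b : (a <= b)%N ->
  - Posz (b - a) <= state_height z b - state_height z a <= Posz (b - a).
Proof.
elim: b => [|b IH] ab; first by rewrite (_ : a = 0%N) ?subrr //; lia.
case: (ltnP a b.+1) => h; last by rewrite (_ : a = b.+1) ?subrr ?subnn //; lia.
have := IH ltac:(lia); rewrite /state_height big_ord_recr /=.
by case: (occ z b); set s := \sum_(i < b) _; lia.
Qed.

Lemma state_column_sandwich z b : (b <= K.*2)%N ->
  state_column z b <= origin_column K b + 0 /\
  origin_column K b <= state_column z b + Posz (K.*2).
Proof.
move=> hb; rewrite /state_column /origin_column addr0; case: ifP => h.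
  by have := state_height_lipschitz z h; lia.
by have := @state_height_lipschitz z K b ltac:(lia); lia.
Qed.

Lemma column_eq_prefix (c d : hconfig n K) h0 i :
  (forall x : 'I_n * 'I_(K.*2.+1), (x.1 < i)%N -> c x = d x) ->
  column c h0 i = column d h0 i.
Proof.
elim: i => [|i IH] H //=.
rewrite IH; last by move=> x hx; apply: H; lia.
congr height_step; apply: funext => b; rewrite /col_open /env.
case: (Posz b - Posz K + Posz K) => // b'.
case: insubP => // x _ xi; case: insubP => // y _ _.
by apply: H => /=; rewrite xi.
Qed.

Lemma col_openE (c : hconfig n K) (i : 'I_n) (b : 'I_(K.*2.+1)) : col_open c i b = c (i, b).
Proof.
rewrite /col_open /env subrK.
rewrite (insubT (fun k => k < n)%N (ltn_ord i)) (insubT (fun k => k < K.*2.+1)%N (ltn_ord b)).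
by congr (c (_, _)); apply: val_inj.
Qed.

Hypothesis K_gt0 : (0 < K)%N.

Lemma column_sandwich (c : hconfig n K) z i b : (b <= K.*2)%N ->
  column c (state_column z) i b <= column c (origin_column K) i b + 0 /\
  column c (origin_column K) i b <= column c (state_column z) i b + Posz (K.*2).
Proof.
elim: i b => [|i IH] b hb /=; first exact: state_column_sandwich.
have Vz := unit_slopes_column c K_gt0 i (unit_slopes_state_column z).
have Vo := unit_slopes_column c K_gt0 i (@unit_slopes_origin_column K).
by split; apply: height_step_le_shift => // b' hb'; have [] := IH b' hb'.
Qed.

End StationaryStart.

Section Expectation.
Variables (R : realType) (K : nat) (eps : R) (nu : {ffun tstate K -> R}) (n : nat).
Hypothesis K_gt0 : (0 < K)%N.
Hypothesis eps01 : 0 < eps < 1.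
Hypothesis nu_stat : tasep_stationary eps nu.

Local Notation W := (@bern_weight R eps ('I_n * 'I_(K.*2.+1))%type).
Local Notation edges_at i := [pred x : 'I_n * 'I_(K.*2.+1) | x.1 == i].

(* Expectation when the initial state [z] is drawn from [nu] and the environment
   independently from the Bernoulli weights. *)
Definition mixture (F : tstate K -> hconfig n K -> R) : R :=
  \sum_z nu z * \sum_c W c * F z c.

Lemma bern_weight_ge0 c : 0 <= W c.
Proof. by apply: prodr_ge0 => x _; rewrite /bern; case: (c x); case/andP: eps01; lra. Qed.

Lemma eq_mixture F G : (forall z c, F z c = G z c) -> mixture F = mixture G.
Proof.
by move=> FG; apply: eq_bigr => z _; congr (_ * _); apply: eq_bigr => c _; rewrite FG.
Qed.

Lemma ler_mixture F G : (forall z c, F z c <= G z c) -> mixture F <= mixture G.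
Proof.
have [nu_ge0 _ _] := nu_stat.
move=> FG; apply: ler_sum => z _; apply: ler_wpM2l => //.
by apply: ler_sum => c _; apply: ler_wpM2l; [exact: bern_weight_ge0 | exact: FG].
Qed.

Lemma mixtureD F G : mixture (fun z c => F z c + G z c) = mixture F + mixture G.
Proof.
rewrite /mixture -big_split /=; apply: eq_bigr => z _.
by rewrite -mulrDr -big_split /=; congr (_ * _); apply: eq_bigr => c _; rewrite mulrDr.
Qed.

Lemma mixtureZ a F : mixture (fun z c => a * F z c) = a * mixture F.
Proof.
rewrite /mixture big_distrr; apply: eq_bigr => z _ /=; rewrite [RHS]mulrCA.
by congr (_ * _); rewrite big_distrr; apply: eq_bigr => c _; rewrite mulrCA.
Qed.

Lemma mixture_sum (I : finType) (F : I -> tstate K -> hconfig n K -> R) :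
  mixture (fun z c => \sum_y F y z c) = \sum_y mixture (F y).
Proof.
rewrite /mixture exchange_big; apply: eq_bigr => z _; rewrite -big_distrr /=.
by rewrite exchange_big; congr (_ * _); apply: eq_bigr => c _; rewrite big_distrr.
Qed.

Lemma mixture_state_free (G : hconfig n K -> R) :
  mixture (fun _ c => G c) = \sum_c W c * G c.
Proof. by have [_ sum_nu _] := nu_stat; rewrite /mixture -big_distrl /= sum_nu mul1r. Qed.

Lemma mixture_cst a : mixture (fun _ _ => a) = a.
Proof. by rewrite mixture_state_free -big_distrl /= sum_bern_weight mul1r. Qed.

Definition state_at (c : hconfig n K) (z : tstate K) (i : nat) : tstate K :=
  height_state K (column c (state_column z) i).

Lemma state_at_succ c z (i : 'I_n) :
  state_at c z i.+1 =
  tupdate (state_at c z i) (tasep_bonds (state_at c z i) [ffun b => c (i, b)]).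
Proof.
rewrite /state_at /= height_state_step //.
  by congr tupdate; apply/ffunP => b; rewrite !ffunE /jumps col_openE.
exact: unit_slopes_column (unit_slopes_state_column z).
Qed.

Lemma state_at_merge (i : 'I_n) z c d :
  state_at (merge_ffun (edges_at i) c d) z i = state_at c z i.
Proof.
rewrite /state_at (@column_eq_prefix n K _ c) // => x hx; rewrite ffunE /=.
by rewrite (_ : (x.1 == i) = false) //; apply/negbTE; rewrite neq_ltn hx.
Qed.

Lemma law_state_at_succ (i : 'I_n) z y' :
  \sum_c W c * (state_at c z i.+1 == y')%:R =
  \sum_y (\sum_c W c * (state_at c z i == y)%:R) * ttrans eps y y'.
Proof.
transitivity (\sum_c \sum_y W c * ((state_at c z i == y)%:R *
    (tupdate y (tasep_bonds y [ffun b => c (i, b)]) == y')%:R)).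
  apply: eq_bigr => c _; rewrite -big_distrr /= state_at_succ.
  by rewrite (sum_eq_indicator (state_at c z i)
    (fun y => (tupdate y (tasep_bonds y [ffun b => c (i, b)]) == y')%:R)).
rewrite exchange_big /=; apply: eq_bigr => y _.
rewrite (@bern_mean_indep R eps _ (edges_at i) (fun c => (state_at c z i == y)%:R)
   (fun c => (tupdate y (tasep_bonds y [ffun b => c (i, b)]) == y')%:R)).
- by rewrite (sum_bern_weight_row eps i (fun row => (tupdate y (tasep_bonds y row) == y')%:R))
    ttrans_bern.
- by move=> c d /=; rewrite state_at_merge.
- move=> c d /=; congr ((tupdate y (tasep_bonds y _) == y')%:R).
  by apply/ffunP => b; rewrite !ffunE /= eqxx.
Qed.

Lemma law_state_at i y : (i <= n)%N -> mixture (fun z c => (state_at c z i == y)%:R) = nu y.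
Proof.
have [_ _ nu_inv] := nu_stat.
elim: i y => [|i IH] y hi.
  rewrite /mixture (eq_bigr (fun z => (z == y)%:R * nu y)).
    by rewrite (bigD1 y) //= eqxx mul1r big1 ?addr0 // => z /negbTE ->; rewrite mul0r.
  move=> z _; rewrite /state_at /= height_state_column -big_distrl /= sum_bern_weight mul1r.
  by case: eqP => [-> | _]; rewrite ?mulr1 ?mul1r ?mulr0 ?mul0r.
rewrite /mixture (eq_bigr (fun z => \sum_y' nu z *
    ((\sum_c W c * (state_at c z i == y')%:R) * ttrans eps y' y))); last first.
  by move=> z _; rewrite (law_state_at_succ (Ordinal hi)) big_distrr.
rewrite exchange_big /= -nu_inv; apply: eq_bigr => y' _.
by rewrite -(IH y' (ltnW hi)) /mixture big_distrl; apply: eq_bigr => z _; rewrite mulrA.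
Qed.

Lemma mixture_closed_edge (i : 'I_n) (b : 'I_(K.*2.+1)) y :
  mixture (fun z c => (state_at c z i == y)%:R * (~~ c (i, b))%:R) = eps * nu y.
Proof.
rewrite -(law_state_at y (ltnW (ltn_ord i))) -mixtureZ; apply: eq_bigr => z _; congr (_ * _).
rewrite (@bern_mean_indep R eps _ (edges_at i) (fun c => (state_at c z i == y)%:R)
   (fun c => (~~ c (i, b))%:R)).
- rewrite (sum_bern_weight_coord eps (i, b) (fun b => (~~ b)%:R)) big_bool /bern /=.
  by rewrite mulr0 mulr1 add0r big_distrl; apply: eq_bigr => c _ /=; ring.
- by move=> c d /=; rewrite state_at_merge.
- by move=> c d /=; rewrite ffunE /= eqxx.
Qed.

(* Bond [K] joins sites [0] and [1]. *)
Lemma mean_jump_origin (i : 'I_n) :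
  mixture (fun z c => (jumps K (column c (state_column z) i) (col_open c i) K)%:R) =
  eps * nu_oc nu.
Proof.
have ltK : (K < K.*2.+1)%N by rewrite ltnS -addnn leq_addr.
pose bK : 'I_(K.*2.+1) := Ordinal ltK.
have jumpE c z : (jumps K (column c (state_column z) i) (col_open c i) K)%:R =
    \sum_y (active y K)%:R * ((state_at c z i == y)%:R * (~~ c (i, bK))%:R) :> R.
  rewrite (eq_bigr (fun y =>
      (state_at c z i == y)%:R * ((active y K)%:R * (~~ c (i, bK))%:R))); last first.
    by move=> y _; rewrite mulrCA.
  rewrite (sum_eq_indicator (state_at c z i)) /jumps -(col_openE c i bK) /state_at /=.
  by case: (active _ K); case: (col_open c i K); rewrite /= ?mulr1 ?mulr0 ?mul0r.
transitivity (mixture (fun z c =>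
    \sum_y (active y K)%:R * ((state_at c z i == y)%:R * (~~ c (i, bK))%:R))).
  exact: eq_mixture.
rewrite mixture_sum /nu_oc big_distrr /= [RHS]big_mkcond /=.
apply: eq_bigr => y _; rewrite mixtureZ mixture_closed_edge.
have K0 : (K == 0%N) = false by rewrite eqn0Ngt K_gt0.
have K2 : (K == K.*2) = false by rewrite -addnn -{1}(addn0 K) eqn_add2l eq_sym eqn0Ngt K_gt0.
by rewrite /active K0 K2; case: (_ && _); rewrite ?mul1r ?mul0r.
Qed.

Definition mean_height (i : nat) : R :=
  mixture (fun z c => (column c (state_column z) i K)%:~R).

Lemma mean_height_succ (i : 'I_n) :
  mean_height i.+1 = mean_height i + (1 + 2 * eps * nu_oc nu).
Proof.
transitivity (mixture (fun z c => (column c (state_column z) i K)%:~R +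
    (1 + 2 * (jumps K (column c (state_column z) i) (col_open c i) K)%:R))).
  apply: eq_mixture => z c; rewrite /= /height_step intrD.
  by case: jumps; rewrite /=; ring.
by rewrite !mixtureD mixture_cst mixtureZ mean_jump_origin mulrA.
Qed.

Lemma mean_heightE i : (i <= n)%N -> mean_height i = i%:R * (1 + 2 * eps * nu_oc nu).
Proof.
elim: i => [_|i IH hi].
  rewrite mul0r -[RHS](mixture_cst 0).
  by apply: eq_mixture => z c; rewrite /= /state_column subrr.
by rewrite (mean_height_succ (Ordinal hi)) IH ?(ltnW hi) // -natr1; ring.
Qed.

Lemma ED_column : ED K eps n = mixture (fun _ c => (column c (origin_column K) n K)%:~R).
Proof. by rewrite mixture_state_free; apply: eq_bigr => c _; rewrite Dist_column. Qed.

Lemma ED_sandwich : mean_height n <= ED K eps n <= mean_height n + 2 * K%:R.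
Proof.
have hK : (K <= K.*2)%N by rewrite -addnn leq_addr.
rewrite ED_column -[2 * K%:R]mixture_cst -mixtureD; apply/andP; split;
  apply: ler_mixture => z c; have [lo up] := column_sandwich K_gt0 c z n hK.
  by move: lo; rewrite addr0 ler_int.
have twoK : (Posz K.*2)%:~R = 2 * K%:R :> R by rewrite -mul2n PoszM intrM.
by move: up; rewrite -(ler_int R) intrD twoK.
Qed.

End Expectation.

Unset Implicit Arguments.

Theorem proposition6 (R : realType) (K : nat) (eps : R)
    (nu : {ffun tstate K -> R}) (n : nat) :
  (1 <= K)%N -> 0 < eps < 1 -> tasep_stationary eps nu ->
  n%:R * (1 + 2 * eps * nu_oc nu) <= ED K eps n /\
  ED K eps n <= n%:R * (1 + 2 * eps * nu_oc nu) + 2 * K%:R.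
Proof.
move=> K_gt0 eps01 nu_stat.
have /andP[] := ED_sandwich n K_gt0 eps01 nu_stat.
by rewrite (mean_heightE K_gt0 nu_stat (leqnn n)).
Qed.
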